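(* Every sublattice $L$ of $A_2$ of rank $2$ is reflection invariant.
   Context: Let $H_0=\{x\in\mathbb R^{3}:x_0+x_1+x_2=0\}$ and $A_2=H_0\cap\mathbb Z^3$. For $p,q\in H_0$ let $d_\triangle(p,q)=\max_i(p_i-q_i)$, and for $x\in H_0$ let $h_{\triangle,L}(x)=\min_{p\in L}d_\triangle(x,p)$. $\mathrm{Crit}(L)$ denotes the set of points of $H_0$ that are local maxima of $h_{\triangle,L}$ on $H_0$. $L$ is reflection invariant if there exists $t\in\mathbb R^{3}$ with $-\mathrm{Crit}(L)=\mathrm{Crit}(L)+t$. *)

From Stdlib Require Import Reals ZArith.
Open Scope R_scope.

Definition pt := (R * R * R)%type.
Definition c0 (x : pt) : R := fst (fst x).
Definition c1 (x : pt) : R := snd (fst x).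
Definition c2 (x : pt) : R := snd x.

Definition zpt := (Z * Z * Z)%type.
Definition zc0 (p : zpt) : Z := fst (fst p).
Definition zc1 (p : zpt) : Z := snd (fst p).
Definition zc2 (p : zpt) : Z := snd p.
Definition zpt_to_pt (p : zpt) : pt := (IZR (zc0 p), IZR (zc1 p), IZR (zc2 p)).

Definition inH0 (x : pt) : Prop := c0 x + c1 x + c2 x = 0.

Definition inA2 (p : zpt) : Prop := (zc0 p + zc1 p + zc2 p = 0)%Z.

Definition zadd (p q : zpt) : zpt := (zc0 p + zc0 q, zc1 p + zc1 q, zc2 p + zc2 q)%Z.
Definition zopp (p : zpt) : zpt := (- zc0 p, - zc1 p, - zc2 p)%Z.
Definition zscale (a : Z) (p : zpt) : zpt := (a * zc0 p, a * zc1 p, a * zc2 p)%Z.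
Definition zzero : zpt := (0, 0, 0)%Z.

Definition is_sublattice_A2 (L : zpt -> Prop) : Prop :=
  (forall p, L p -> inA2 p) /\
  L zzero /\
  (forall p q, L p -> L q -> L (zadd p q)) /\
  (forall p, L p -> L (zopp p)).

(* L has rank 2: it contains two linearly independent vectors
   (rank of a subgroup of A_2 ≅ Z^2 is at most 2). *)
Definition has_rank2 (L : zpt -> Prop) : Prop :=
  exists u v, L u /\ L v /\
    forall a b : Z, zadd (zscale a u) (zscale b v) = zzero -> a = 0%Z /\ b = 0%Z.

Definition d_tri (p q : pt) : R :=
  Rmax (c0 p - c0 q) (Rmax (c1 p - c1 q) (c2 p - c2 q)).

(* is_hval L x v  <->  v = h_{triangle,L}(x) = min_{p in L} d_triangle(x, p)
   (the minimum is attained, L being a discrete set). *)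
Definition is_hval (L : zpt -> Prop) (x : pt) (v : R) : Prop :=
  (exists p, L p /\ d_tri x (zpt_to_pt p) = v) /\
  (forall p, L p -> v <= d_tri x (zpt_to_pt p)).

Definition inCrit (L : zpt -> Prop) (x : pt) : Prop :=
  inH0 x /\
  exists vx, is_hval L x vx /\
  exists eps, eps > 0 /\
    forall y, inH0 y ->
      Rabs (c0 y - c0 x) < eps -> Rabs (c1 y - c1 x) < eps -> Rabs (c2 y - c2 x) < eps ->
      forall vy, is_hval L y vy -> vy <= vx.

Definition popp (x : pt) : pt := (- c0 x, - c1 x, - c2 x).
Definition padd (x y : pt) : pt := (c0 x + c0 y, c1 x + c1 y, c2 x + c2 y).
Definition psub (x y : pt) : pt := (c0 x - c0 y, c1 x - c1 y, c2 x - c2 y).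

Definition reflection_invariant (L : zpt -> Prop) : Prop :=
  exists t : pt, forall x : pt,
    inCrit L (popp x) <-> inCrit L (psub x t).

(* A local maximum of [h] is the centre of an up-triangle {y | a_i <= y_i} with integral
   corner [a] that contains no point of [L] in its interior but one in the relative interior
   of each side: otherwise moving towards a bare side increases [h]. The three touching
   points of such a maximal empty triangle span [L], and two such triangles with corners
   incongruent modulo [L] can be separated by a line. Separating the second one from all
   translates of the first forces its touching points to form a translate of the triangle
   opposite to the first one. Hence the critical set is [L]-invariant and contained in two
   cosets [x0 + L], [y0 + L], and [t = -(x0 + y0)] exchanges [-Crit(L)] and [Crit(L) + t]. *)

From Pilot Require Import Defs.
From Stdlib Require Import Reals ZArith Lia Psatz Classical Lra.
(* Re-imported so that [Defs.c1] shadows the field [c1] of Stdlib's [C1_fun]. *)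
Import Defs.

Inductive idx := I0 | I1 | I2.

Definition zc (i : idx) (p : zpt) : Z :=
  match i with I0 => zc0 p | I1 => zc1 p | I2 => zc2 p end.

Definition mkz (f : idx -> Z) : zpt := (f I0, f I1, f I2).

Definition idx_succ (i : idx) : idx := match i with I0 => I1 | I1 => I2 | I2 => I0 end.

Definition idx_third (i j : idx) : idx :=
  match i, j with
  | I0, I1 | I1, I0 => I2
  | I0, I2 | I2, I0 => I1
  | _, _ => I0
  end.

Lemma idx_eq_dec (i j : idx) : {i = j} + {i <> j}.
Proof. decide equality. Defined.

Lemma idx_third_neq (i j : idx) : i <> j -> idx_third i j <> i /\ idx_third i j <> j.
Proof. destruct i, j; simpl; split; congruence. Qed.

Lemma idx_cover (i j k : idx) : i <> j -> j <> k -> i <> k -> forall m, m = i \/ m = j \/ m = k.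
Proof. destruct i, j, k; intros ? ? ? []; tauto || congruence. Qed.

Lemma idx_succ_cases (i j k : idx) : i <> j -> j <> k -> i <> k ->
  idx_succ k = i \/ idx_succ k = j.
Proof. destruct i, j, k; simpl; intros; tauto || congruence. Qed.

Lemma idx_choice {A : Type} (R : idx -> A -> Prop) :
  (forall j, exists x, R j x) -> exists f : idx -> A, forall j, R j (f j).
Proof.
  intro H; destruct (H I0) as [x0 H0], (H I1) as [x1 H1], (H I2) as [x2 H2].
  exists (fun j => match j with I0 => x0 | I1 => x1 | I2 => x2 end); now intros [].
Qed.

Lemma zpt_ext (p q : zpt) : (forall i, zc i p = zc i q) -> p = q.
Proof.
  destruct p as [[p0 p1] p2], q as [[q0 q1] q2]; intro H.
  generalize (H I0) (H I1) (H I2); simpl; unfold zc0, zc1, zc2; simpl.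
  intros -> -> ->; reflexivity.
Qed.

Definition zsub (p q : zpt) : zpt := zadd p (zopp q).

Lemma zc_mkz f i : zc i (mkz f) = f i.
Proof. now destruct i. Qed.
Lemma zc_add i p q : zc i (zadd p q) = (zc i p + zc i q)%Z.
Proof. now destruct i. Qed.
Lemma zc_opp i p : zc i (zopp p) = (- zc i p)%Z.
Proof. now destruct i. Qed.
Lemma zc_sub i p q : zc i (zsub p q) = (zc i p - zc i q)%Z.
Proof. unfold zsub; rewrite zc_add, zc_opp; lia. Qed.
Lemma zc_scale i a p : zc i (zscale a p) = (a * zc i p)%Z.
Proof. now destruct i. Qed.
Lemma zc_zero i : zc i zzero = 0%Z.
Proof. now destruct i. Qed.

Ltac zcoords := repeat rewrite ?zc_add, ?zc_sub, ?zc_opp, ?zc_scale, ?zc_zero, ?zc_mkz in *.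

Lemma inA2_sum p (i j k : idx) : inA2 p -> i <> j -> j <> k -> i <> k ->
  (zc i p + zc j p + zc k p = 0)%Z.
Proof. unfold inA2; destruct i, j, k; simpl; intros; congruence || lia. Qed.

(** * A planar lemma on unit triangles *)

Open Scope R_scope.

Definition sumI (f : idx -> R) : R := f I0 + f I1 + f I2.

Lemma up_floor (x : R) : IZR (up x - 1) <= x < IZR (up x - 1) + 1.
Proof. destruct (archimed x); rewrite minus_IZR; simpl; lra. Qed.

Lemma first_exit_time c1 c2 c3 d1 d2 d3 : 0 < c1 -> 0 < c2 -> 0 < c3 ->
  (c1 + d1 < 0 \/ c2 + d2 < 0 \/ c3 + d3 < 0) ->
  exists t, 0 < t < 1 /\ c1 + t * d1 >= 0 /\ c2 + t * d2 >= 0 /\ c3 + t * d3 >= 0 /\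
    (c1 + t * d1 = 0 \/ c2 + t * d2 = 0 \/ c3 + t * d3 = 0).
Proof.
  intros H1 H2 H3 Hv.
  (* exit time of a single constraint, [2] standing for "never" *)
  set (r := fun c d => if Rlt_dec d 0 then c / (- d) else 2).
  assert (Rpos : forall c d, 0 < c -> 0 < r c d).
  { intros c d Hc; unfold r; destruct (Rlt_dec d 0); [apply Rdiv_lt_0_compat|]; lra. }
  assert (Rok : forall c d t, 0 < c -> 0 <= t -> t <= r c d -> c + t * d >= 0).
  { intros c d t Hc Ht Htr; unfold r in Htr; destruct (Rlt_dec d 0); [|nra].
    apply Rle_ge; assert (t * (- d) <= c / (- d) * (- d)) by (apply Rmult_le_compat_r; lra).
    field_simplify in H; lra. }
  assert (Rlt1 : forall c d, 0 < c -> c + d < 0 -> r c d < 1).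
  { intros c d Hc Hcd; unfold r; destruct (Rlt_dec d 0); [|lra].
    apply (Rmult_lt_reg_r (- d)); [lra|]; field_simplify; lra. }
  assert (Req : forall c d, r c d < 2 -> c + r c d * d = 0).
  { intros c d H; unfold r in *; destruct (Rlt_dec d 0); [field|]; lra. }
  set (t := Rmin (r c1 d1) (Rmin (r c2 d2) (r c3 d3))).
  assert (t <= r c1 d1) by apply Rmin_l.
  assert (t <= r c2 d2) by (eapply Rle_trans; [apply Rmin_r | apply Rmin_l]).
  assert (t <= r c3 d3) by (eapply Rle_trans; [apply Rmin_r | apply Rmin_r]).
  assert (0 < t) by (apply Rmin_pos; [|apply Rmin_pos]; apply Rpos; lra).
  assert (t < 1).
  { destruct Hv as [Hv|[Hv|Hv]]; [pose proof (Rlt1 _ _ H1 Hv) | pose proof (Rlt1 _ _ H2 Hv)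
                                 | pose proof (Rlt1 _ _ H3 Hv)]; lra. }
  exists t; repeat split; try lra; try (apply Rok; lra).
  unfold t in *.
  destruct (Rle_dec (r c1 d1) (Rmin (r c2 d2) (r c3 d3))).
  - rewrite Rmin_left in * by lra; left; apply Req; lra.
  - rewrite Rmin_right in * by lra.
    destruct (Rle_dec (r c2 d2) (r c3 d3)).
    + rewrite Rmin_left in * by lra; right; left; apply Req; lra.
    + rewrite Rmin_right in * by lra; right; right; apply Req; lra.
Qed.

Section UnitTriangles.

Variables (m n : idx -> Z).

Definition det3 : Z :=
  ((m I1 - m I0) * (n I2 - n I0) - (n I1 - n I0) * (m I2 - m I0))%Z.

Definition separated_from_up (l1 l2 : Z) : Prop :=
  exists c al be ga : Z, (al <> 0 \/ be <> 0)%Z /\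
    (c + al * l1 + be * l2 >= ga)%Z /\ (c + al * (l1 + 1) + be * l2 >= ga)%Z /\
    (c + al * l1 + be * (l2 + 1) >= ga)%Z /\
    forall j, (c + al * m j + be * n j <= ga)%Z.

Hypothesis Hdet : det3 <> 0%Z.
Hypothesis Hsep : forall l1 l2, separated_from_up l1 l2.

Lemma vertex_strictly_below c al be ga : (al <> 0 \/ be <> 0)%Z ->
  (forall j, (c + al * m j + be * n j <= ga)%Z) ->
  exists j, (c + al * m j + be * n j < ga)%Z.
Proof.
  intros Hab HQ; apply NNPP; intro Hno.
  assert (Hall : forall j, (c + al * m j + be * n j = ga)%Z).
  { intro j; specialize (HQ j); destruct (Z.eq_dec (c + al * m j + be * n j) ga); auto.
    exfalso; apply Hno; exists j; lia. }
  pose proof (Hall I0); pose proof (Hall I1); pose proof (Hall I2).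
  assert (E1 : (al * (m I1 - m I0) + be * (n I1 - n I0) = 0)%Z) by lia.
  assert (E2 : (al * (m I2 - m I0) + be * (n I2 - n I0) = 0)%Z) by lia.
  assert (Hal : (al * det3 = 0)%Z).
  { unfold det3.
    replace (al * _)%Z with ((al * (m I1 - m I0) + be * (n I1 - n I0)) * (n I2 - n I0)
                             - (al * (m I2 - m I0) + be * (n I2 - n I0)) * (n I1 - n I0))%Z
      by ring.
    rewrite E1, E2; ring. }
  assert (Hbe : (be * det3 = 0)%Z).
  { unfold det3.
    replace (be * _)%Z with ((al * (m I2 - m I0) + be * (n I2 - n I0)) * (m I1 - m I0)
                             - (al * (m I1 - m I0) + be * (n I1 - n I0)) * (m I2 - m I0))%Z
      by ring.
    rewrite E1, E2; ring. }
  apply Z.mul_eq_0 in Hal; apply Z.mul_eq_0 in Hbe; lia.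
Qed.

(* The separating function is [>= ga] on the up-triangle and, some vertex being strictly
   below [ga], [< ga] on the open hull. *)
Lemma up_triangle_misses_open_hull (l1 l2 : Z) (u v : R) (lam : idx -> R) :
  0 <= u -> 0 <= v -> u + v <= 1 ->
  (forall i, 0 < lam i) -> sumI lam = 1 ->
  IZR l1 + u = sumI (fun i => lam i * IZR (m i)) ->
  IZR l2 + v = sumI (fun i => lam i * IZR (n i)) -> False.
Proof.
  intros Hu Hv Huv Hl Hs Hm Hn.
  destruct (Hsep l1 l2) as [c [al [be [ga [Hab [T0 [T1 [T2 HQ]]]]]]]].
  destruct (vertex_strictly_below c al be ga Hab HQ) as [j Hj].
  set (Psi := fun x y => IZR c + IZR al * x + IZR be * y).
  assert (A1 : Psi (IZR l1 + u) (IZR l2 + v) >= IZR ga).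
  { unfold Psi.
    apply Z.ge_le, IZR_le in T0; apply Z.ge_le, IZR_le in T1; apply Z.ge_le, IZR_le in T2.
    rewrite !plus_IZR, !mult_IZR in T0, T1, T2; rewrite plus_IZR in T1, T2.
    assert (0 <= (1 - u - v) * (IZR c + IZR al * IZR l1 + IZR be * IZR l2 - IZR ga))
      by (apply Rmult_le_pos; lra).
    assert (0 <= u * (IZR c + IZR al * (IZR l1 + 1) + IZR be * IZR l2 - IZR ga))
      by (apply Rmult_le_pos; lra).
    assert (0 <= v * (IZR c + IZR al * IZR l1 + IZR be * (IZR l2 + 1) - IZR ga))
      by (apply Rmult_le_pos; lra).
    nra. }
  assert (A2 : Psi (IZR l1 + u) (IZR l2 + v) < IZR ga).
  { unfold Psi; rewrite Hm, Hn; unfold sumI in *.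
    assert (G : forall i, IZR c + IZR al * IZR (m i) + IZR be * IZR (n i) <= IZR ga).
    { intro i; specialize (HQ i); apply IZR_le in HQ; rewrite !plus_IZR, !mult_IZR in HQ; lra. }
    assert (Gj : IZR c + IZR al * IZR (m j) + IZR be * IZR (n j) < IZR ga).
    { apply IZR_lt in Hj; rewrite !plus_IZR, !mult_IZR in Hj; lra. }
    pose proof (G I0); pose proof (G I1); pose proof (G I2).
    pose proof (Hl I0); pose proof (Hl I1); pose proof (Hl I2).
    assert (IZR c = (lam I0 + lam I1 + lam I2) * IZR c) by (rewrite Hs; ring).
    destruct j; nra. }
  lra.
Qed.

(* Walking from the centroid towards a vertex outside the down-triangle, one reaches its
   boundary, which is covered by closed up-triangles, while still in the open hull. *)
Lemma vertices_in_down_triangle (l1 l2 : Z) (u v : R) :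
  u < 1 -> v < 1 -> 1 < u + v ->
  IZR l1 + u = sumI (fun i => IZR (m i)) / 3 ->
  IZR l2 + v = sumI (fun i => IZR (n i)) / 3 ->
  forall j, (m j - l1 <= 1 /\ n j - l2 <= 1 /\ 1 <= m j - l1 + (n j - l2))%Z.
Proof.
  intros Hu Hv Huv Hgm Hgn j; apply NNPP; intro Hno.
  set (A := IZR (m j) - IZR l1); set (B := IZR (n j) - IZR l2).
  assert (Hviol : (u + v - 1) + ((A - u) + (B - v)) < 0 \/ (1 - u) + (- (A - u)) < 0 \/
                  (1 - v) + (- (B - v)) < 0).
  { unfold A, B; rewrite <- !minus_IZR.
    destruct (Z_le_gt_dec (m j - l1 + (n j - l2)) 0) as [Z1|Z1]; [left | right].
    - apply IZR_le in Z1; rewrite plus_IZR in Z1; lra.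
    - destruct (Z_le_gt_dec 2 (m j - l1)) as [Z2|Z2]; [left | right].
      + apply IZR_le in Z2; lra.
      + assert (Z3 : (2 <= n j - l2)%Z) by lia; apply IZR_le in Z3; lra. }
  destruct (first_exit_time (u + v - 1) (1 - u) (1 - v) ((A - u) + (B - v)) (- (A - u))
              (- (B - v))) as [t [Ht [G1 [G2 [G3 Gz]]]]]; try lra.
  set (lam := fun i => (1 - t) / 3 + (if idx_eq_dec i j then t else 0)).
  assert (Hlam : forall i, 0 < lam i) by (intro i; unfold lam; destruct idx_eq_dec; lra).
  assert (Hs : sumI lam = 1) by (unfold sumI, lam; destruct j; simpl; lra).
  set (U := u + t * (A - u)); set (V := v + t * (B - v)).
  assert (SmU : sumI (fun i => lam i * IZR (m i)) = IZR l1 + U).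
  { transitivity ((1 - t) * (sumI (fun i => IZR (m i)) / 3) + t * IZR (m j)).
    - unfold sumI, lam; destruct j; simpl; lra.
    - rewrite <- Hgm; unfold U, A; ring. }
  assert (SnV : sumI (fun i => lam i * IZR (n i)) = IZR l2 + V).
  { transitivity ((1 - t) * (sumI (fun i => IZR (n i)) / 3) + t * IZR (n j)).
    - unfold sumI, lam; destruct j; simpl; lra.
    - rewrite <- Hgn; unfold V, B; ring. }
  assert (U <= 1) by (unfold U; nra); assert (V <= 1) by (unfold V; nra).
  assert (U + V >= 1) by (unfold U, V; nra).
  destruct Gz as [Z1|[Z2|Z3]].
  - apply (up_triangle_misses_open_hull l1 l2 U V lam); auto; unfold U, V in *; lra.
  - apply (up_triangle_misses_open_hull (l1 + 1) l2 0 V lam); auto; try lra;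
      rewrite ?plus_IZR; unfold U in *; lra.
  - apply (up_triangle_misses_open_hull l1 (l2 + 1) U 0 lam); auto; try lra;
      rewrite ?plus_IZR; unfold V in *; lra.
Qed.

Lemma down_triangle_of_separated : exists l1 l2 : Z, forall j,
  (m j = l1 + 1 /\ n j = l2)%Z \/ (m j = l1 /\ n j = l2 + 1)%Z \/
  (m j = l1 + 1 /\ n j = l2 + 1)%Z.
Proof.
  set (gm := sumI (fun i => IZR (m i)) / 3); set (gn := sumI (fun i => IZR (n i)) / 3).
  set (l1 := (up gm - 1)%Z); set (l2 := (up gn - 1)%Z).
  pose proof (up_floor gm) as Fm; pose proof (up_floor gn) as Fn; fold l1 in Fm; fold l2 in Fn.
  assert (Huv : 1 < (gm - IZR l1) + (gn - IZR l2)).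
  { (* otherwise the centroid lies in the closed up-triangle at [(l1, l2)] *)
    apply Rnot_le_lt; intro Hle.
    apply (up_triangle_misses_open_hull l1 l2 (gm - IZR l1) (gn - IZR l2) (fun _ => 1/3));
      try (intros; lra); unfold sumI in *; unfold gm, gn; lra. }
  exists l1, l2; intro j.
  assert (Hgm : IZR l1 + (gm - IZR l1) = gm) by ring.
  assert (Hgn : IZR l2 + (gn - IZR l2) = gn) by ring.
  pose proof (vertices_in_down_triangle l1 l2 (gm - IZR l1) (gn - IZR l2)
                ltac:(lra) ltac:(lra) Huv Hgm Hgn j).
  lia.
Qed.

End UnitTriangles.

Close Scope R_scope.

(** * Empty up-triangles of a sublattice *)

Section Sublattice.

Variable L : zpt -> Prop.
Hypothesis HL : is_sublattice_A2 L.

Lemma L_A2 p : L p -> inA2 p. Proof. apply HL. Qed.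
Lemma L_zero : L zzero. Proof. apply HL. Qed.
Lemma L_add p q : L p -> L q -> L (zadd p q). Proof. apply HL. Qed.
Lemma L_opp p : L p -> L (zopp p). Proof. apply HL. Qed.
Lemma L_sub p q : L p -> L q -> L (zsub p q).
Proof. intros; apply L_add, L_opp; assumption. Qed.

Lemma L_scale k p : L p -> L (zscale k p).
Proof.
  intro Lp.
  assert (Hnat : forall n : nat, L (zscale (Z.of_nat n) p)).
  { induction n as [|n IH].
    - replace (zscale _ p) with zzero by (apply zpt_ext; intro; zcoords; lia).
      exact L_zero.
    - replace (zscale _ p) with (zadd p (zscale (Z.of_nat n) p))
        by (apply zpt_ext; intro; zcoords; lia).
      now apply L_add. }
  destruct (Z_le_gt_dec 0 k).
  - replace k with (Z.of_nat (Z.to_nat k)) by lia; apply Hnat.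
  - replace (zscale k p) with (zopp (zscale (Z.of_nat (Z.to_nat (- k))) p))
      by (apply zpt_ext; intro; zcoords; lia).
    apply L_opp, Hnat.
Qed.

(* [a] is the corner of the up-triangle {y in H_0 | a_i <= y_i}; side [j] is y_j = a_j. *)
Definition on_side (a : zpt) (j : idx) (p : zpt) : Prop :=
  L p /\ zc j p = zc j a /\ forall k, k <> j -> (zc k a < zc k p)%Z.

Definition empty_up (a : zpt) : Prop :=
  forall q, L q -> exists i, (zc i q <= zc i a)%Z.

(* Side [j] may carry several points of [L]; the one lowest in coordinate [idx_succ j] is a
   choice compatible between two triangles sharing that side. *)
Definition lowest_on_side (a : zpt) (j : idx) (p : zpt) : Prop :=
  on_side a j p /\ forall p', on_side a j p' -> (zc (idx_succ j) p <= zc (idx_succ j) p')%Z.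

Definition maximal_empty (a : zpt) : Prop :=
  empty_up a /\ forall j, exists p, on_side a j p.

Lemma on_side_ge a j p k : on_side a j p -> (zc k a <= zc k p)%Z.
Proof.
  intros [_ [Hj Hk]]; destruct (idx_eq_dec k j) as [->|Hkj]; [lia|].
  specialize (Hk k Hkj); lia.
Qed.

Lemma on_sides_lt b (Q : idx -> zpt) : (forall j, on_side b j (Q j)) ->
  forall j k, k <> j -> (zc j (Q j) < zc j (Q k))%Z.
Proof.
  intros HQ j k Hkj; destruct (HQ j) as [_ [E _]], (HQ k) as [_ [_ H]].
  specialize (H j (not_eq_sym Hkj)); lia.
Qed.

Lemma lowest_on_side_exists a j : (exists p, on_side a j p) -> exists p, lowest_on_side a j p.
Proof.
  intros [p0 Hp0].
  set (height := fun p => Z.to_nat (zc (idx_succ j) p - zc (idx_succ j) a)).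
  destruct (Wf_nat.dec_inh_nat_subset_has_unique_least_element
              (fun h => exists p, on_side a j p /\ height p = h))
    as [h [[[p [Sp Hp]] Hmin] _]].
  - intro; apply classic.
  - exists (height p0), p0; auto.
  - exists p; split; [exact Sp|]; intros p' Sp'.
    assert (Hsucc : idx_succ j <> j) by (destruct j; discriminate).
    pose proof (proj2 (proj2 Sp) _ Hsucc); pose proof (proj2 (proj2 Sp') _ Hsucc).
    assert (h <= height p')%nat by (apply Hmin; eauto).
    unfold height in *; lia.
Qed.

Lemma empty_up_add a l : L l -> empty_up a -> empty_up (zadd a l).
Proof.
  intros Ll Ea q Lq; destruct (Ea (zsub q l) (L_sub _ _ Lq Ll)) as [i Hi].
  exists i; zcoords; lia.
Qed.

Lemma on_side_add a j p l : L l -> on_side a j p -> on_side (zadd a l) j (zadd p l).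
Proof.
  intros Ll [Lp [Hj Hk]]; split; [now apply L_add|]; zcoords; split; [lia|].
  intros k Hkj; specialize (Hk k Hkj); zcoords; lia.
Qed.

Lemma lowest_on_side_add a j p l :
  L l -> lowest_on_side a j p -> lowest_on_side (zadd a l) j (zadd p l).
Proof.
  intros Ll [Sp Hmin]; split; [now apply on_side_add|]; intros p' Sp'.
  assert (Sp'' : on_side a j (zsub p' l)).
  { replace a with (zadd (zadd a l) (zopp l)) by (apply zpt_ext; intro; zcoords; lia).
    apply on_side_add; [now apply L_opp | exact Sp']. }
  specialize (Hmin _ Sp''); zcoords; lia.
Qed.

(** * Separating two maximal empty up-triangles *)

Definition zdot (psi z : zpt) : Z :=
  (zc I0 psi * zc I0 z + zc I1 psi * zc I1 z + zc I2 psi * zc I2 z)%Z.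

(* [psi] is not a multiple of (1,1,1), i.e. it is a nonzero functional on H_0. *)
Definition nonconstant (psi : zpt) : Prop := exists i i', zc i psi <> zc i' psi.

Definition separable (P Q : idx -> zpt) : Prop :=
  exists psi gam, nonconstant psi /\
    forall m, (gam <= zdot psi (P m))%Z /\ (zdot psi (Q m) <= gam)%Z.

Lemma zdot_add psi x y : zdot psi (zadd x y) = (zdot psi x + zdot psi y)%Z.
Proof. unfold zdot; zcoords; ring. Qed.

Lemma zdot_scale psi k x : zdot psi (zscale k x) = (k * zdot psi x)%Z.
Proof. unfold zdot; zcoords; ring. Qed.

Lemma separable_sym P Q : separable Q P -> separable P Q.
Proof.
  intros [psi [gam [[i [i' Hii]] H]]]; exists (zopp psi), (- gam)%Z; split.
  - exists i, i'; zcoords; lia.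
  - intro m; destruct (H m); unfold zdot in *; zcoords; lia.
Qed.

Lemma separable_by_two_coords P Q (i j : idx) (al be gam : Z) :
  i <> j -> (al <> 0 \/ be <> 0)%Z ->
  (forall m, (gam <= al * zc j (P m) - be * zc i (P m))%Z) ->
  (forall m, (al * zc j (Q m) - be * zc i (Q m) <= gam)%Z) ->
  separable P Q.
Proof.
  intros Hij Hab HP HQ.
  set (psi := mkz (fun t => if idx_eq_dec t j then al
                            else if idx_eq_dec t i then (- be)%Z else 0%Z)).
  assert (Hpsi : forall z, zdot psi z = (al * zc j z - be * zc i z)%Z).
  { intro z; unfold zdot, psi; zcoords.
    destruct i, j; try congruence; simpl; ring. }
  exists psi, gam; split.
  - destruct (idx_third_neq i j Hij) as [Hki Hkj].
    unfold psi; destruct Hab; [exists j | exists i]; exists (idx_third i j); zcoords;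
      repeat destruct idx_eq_dec; congruence || lia.
  - intro m; rewrite !Hpsi; auto.
Qed.

Section TwoTriangles.

Variables (a b : zpt) (P Q : idx -> zpt).
Hypothesis Ea : empty_up a.
Hypothesis Eb : empty_up b.
Hypothesis HP : forall j, lowest_on_side a j (P j).
Hypothesis HQ : forall j, lowest_on_side b j (Q j).

Let SP j : on_side a j (P j) := proj1 (HP j).
Let SQ j : on_side b j (Q j) := proj1 (HQ j).

Lemma coord_below_a m (i : idx) :
  (forall i', i' <> i -> (zc i' a < zc i' b)%Z) -> (zc i (Q m) <= zc i a)%Z.
Proof.
  intros Hb; destruct (Ea (Q m) (proj1 (SQ m))) as [i' Hi'].
  destruct (idx_eq_dec i' i) as [->|Hne]; [exact Hi'|].
  pose proof (on_side_ge _ _ _ i' (SQ m)); specialize (Hb i' Hne); lia.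
Qed.

Lemma empty_up_le_eq : (forall i, (zc i a <= zc i b)%Z) -> a = b.
Proof.
  intro Hab; apply zpt_ext; intro j.
  destruct (Ea (Q j) (proj1 (SQ j))) as [i Hi].
  destruct (SQ j) as [_ [Hj Hk]]; pose proof (Hab i); pose proof (Hab j).
  destruct (idx_eq_dec i j) as [->|Hij]; [lia|].
  specialize (Hk i Hij); lia.
Qed.

Lemma separable_one_above (i1 i2 j : idx) :
  i1 <> i2 -> i2 <> j -> i1 <> j ->
  (zc i1 a < zc i1 b)%Z -> (zc i2 a < zc i2 b)%Z -> separable P Q.
Proof.
  intros H12 H2j H1j Hi1 Hi2.
  apply (separable_by_two_coords P Q i1 j 1 0 (zc j a)); [exact H1j | lia | |].
  - intro m; pose proof (on_side_ge _ _ _ j (SP m)); lia.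
  - intro m; enough (zc j (Q m) <= zc j a)%Z by lia.
    apply coord_below_a; intros i' Hi'.
    destruct (idx_cover i1 i2 j H12 H2j H1j i') as [ -> | [ -> | -> ] ]; tauto || congruence.
Qed.

Section OneCoordinateEqual.

Variables i j k : idx.
Hypotheses (Hij : i <> j) (Hjk : j <> k) (Hik : i <> k) (Hsucc : idx_succ k = i).
Hypotheses (Hi : (zc i a < zc i b)%Z) (Hj : (zc j b < zc j a)%Z) (Hk : zc k a = zc k b).

Lemma P_coord_i m : m <> k -> (zc i (P m) <= zc i b)%Z.
Proof.
  intro Hm; destruct (SP m) as [Lp [Hmm Hmo]].
  destruct (Eb (P m) Lp) as [i' Hi'].
  destruct (idx_cover i j k Hij Hjk Hik i') as [ -> | [ -> | -> ] ]; [exact Hi' | |].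
  - pose proof (on_side_ge _ _ _ j (SP m)); lia.
  - specialize (Hmo k (not_eq_sym Hm)); lia.
Qed.

Lemma Q_coord_j m : m <> k -> (zc j (Q m) <= zc j a)%Z.
Proof.
  intro Hm; destruct (SQ m) as [Lq [Hmm Hmo]].
  destruct (Ea (Q m) Lq) as [i' Hi'].
  destruct (idx_cover i j k Hij Hjk Hik i') as [ -> | [ -> | -> ] ]; [ | exact Hi' |].
  - pose proof (on_side_ge _ _ _ i (SQ m)); lia.
  - specialize (Hmo k (not_eq_sym Hm)); lia.
Qed.

(* If [P k] also lies on side [k] of [b], minimality along [idx_succ k = i] in both
   triangles forces [P k = Q k]. *)
Lemma shared_side_point : (zc i b < zc i (P k))%Z -> P k = Q k.
Proof.
  intro HPk.
  destruct (SP k) as [LPk [EPk HPo]], (SQ k) as [LQk [EQk HQo]].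
  pose proof (HPo j Hjk) as HPj; pose proof (HQo i Hik) as HQi.
  pose proof (inA2_sum _ i j k (L_A2 _ LPk) Hij Hjk Hik).
  pose proof (inA2_sum _ i j k (L_A2 _ LQk) Hij Hjk Hik).
  assert (Pb : on_side b k (P k)).
  { split; [exact LPk | split; [lia|]].
    intros t Ht; destruct (idx_cover i j k Hij Hjk Hik t) as [ -> | [ -> | -> ] ];
      congruence || lia. }
  assert (Hle : (zc i (Q k) <= zc i (P k))%Z).
  { rewrite <- Hsucc; exact (proj2 (HQ k) _ Pb). }
  assert (Qa : on_side a k (Q k)).
  { split; [exact LQk | split; [lia|]].
    intros t Ht; destruct (idx_cover i j k Hij Hjk Hik t) as [ -> | [ -> | -> ] ];
      congruence || lia. }
  assert (Hge : (zc i (P k) <= zc i (Q k))%Z).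
  { rewrite <- Hsucc; exact (proj2 (HP k) _ Qa). }
  apply zpt_ext; intro t.
  destruct (idx_cover i j k Hij Hjk Hik t) as [ -> | [ -> | -> ] ]; lia.
Qed.

Lemma separable_one_equal : separable P Q.
Proof.
  destruct (Z_le_gt_dec (zc i (P k)) (zc i b)) as [HPk|HPk].
  - apply (separable_by_two_coords P Q i j 0 1 (- zc i b)); [exact Hij | lia | |].
    + intro m; destruct (idx_eq_dec m k) as [->|Hm]; [lia|].
      pose proof (P_coord_i m Hm); lia.
    + intro m; pose proof (on_side_ge _ _ _ i (SQ m)); lia.
  - (* the common vertex [w = P k = Q k] lies on the separating line *)
    pose proof (shared_side_point ltac:(lia)) as Hw.
    set (w := P k) in *.
    assert (Hwj : (zc j a < zc j w)%Z) by exact (proj2 (proj2 (SP k)) j Hjk).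
    apply (separable_by_two_coords P Q i j (zc i w - zc i b) (zc j w - zc j a)
             ((zc i w - zc i b) * zc j a - (zc j w - zc j a) * zc i b));
      [exact Hij | lia | |].
    + intro m; destruct (idx_eq_dec m k) as [->|Hm]; [fold w; nia|].
      pose proof (P_coord_i m Hm); pose proof (on_side_ge _ _ _ j (SP m)); nia.
    + intro m; destruct (idx_eq_dec m k) as [->|Hm]; [rewrite <- Hw; nia|].
      pose proof (Q_coord_j m Hm); pose proof (on_side_ge _ _ _ i (SQ m)); nia.
Qed.

End OneCoordinateEqual.

End TwoTriangles.

Lemma maximal_empty_separable a b P Q :
  empty_up a -> empty_up b ->
  (forall j, lowest_on_side a j (P j)) -> (forall j, lowest_on_side b j (Q j)) ->
  a <> b -> separable P Q.
Proof.
  intros Ea Eb HP HQ Hab.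
  destruct (classic (forall t, (zc t a <= zc t b)%Z)) as [H1|H1].
  { exfalso; apply Hab; eapply empty_up_le_eq; eauto. }
  destruct (classic (forall t, (zc t b <= zc t a)%Z)) as [H2|H2].
  { exfalso; apply Hab; symmetry; eapply empty_up_le_eq; eauto. }
  apply not_all_ex_not in H1 as [j Hj]; apply not_all_ex_not in H2 as [i Hi].
  assert (Hij : i <> j) by (intros ->; lia).
  destruct (idx_third_neq i j Hij) as [Hki Hkj]; set (k := idx_third i j) in *.
  destruct (Z.lt_total (zc k a) (zc k b)) as [Hk|[Hk|Hk]].
  - eapply (separable_one_above a b P Q Ea HP HQ i k j); congruence || lia.
  - destruct (idx_succ_cases i j k Hij (not_eq_sym Hkj) (not_eq_sym Hki)) as [Hn|Hn].
    + eapply (separable_one_equal a b P Q Ea Eb HP HQ i j k); congruence || lia.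
    + apply separable_sym.
      eapply (separable_one_equal b a Q P Eb Ea HQ HP j i k); congruence || lia.
  - apply separable_sym.
    eapply (separable_one_above b a Q P Eb HQ HP j k i); congruence || lia.
Qed.

Section TouchingTriangle.

Variables (a : zpt) (P : idx -> zpt).
Hypothesis HP : forall j, on_side a j (P j).

Definition edge1 : zpt := zsub (P I1) (P I0).
Definition edge2 : zpt := zsub (P I2) (P I0).
Definition tri_det : Z := (zc I0 edge1 * zc I1 edge2 - zc I1 edge1 * zc I0 edge2)%Z.
Definition tri_point (m n : Z) : zpt := zadd (P I0) (zadd (zscale m edge1) (zscale n edge2)).

Lemma L_edge1 : L edge1. Proof. apply L_sub; apply HP. Qed.
Lemma L_edge2 : L edge2. Proof. apply L_sub; apply HP. Qed.
Lemma L_edge_comb m n : L (zadd (zscale m edge1) (zscale n edge2)).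
Proof. apply L_add; apply L_scale; [exact L_edge1 | exact L_edge2]. Qed.

Lemma touching_coords :
  zc I0 (P I0) = zc I0 a /\ (zc I1 a < zc I1 (P I0))%Z /\ (zc I2 a < zc I2 (P I0))%Z /\
  (zc I0 a < zc I0 (P I1))%Z /\ zc I1 (P I1) = zc I1 a /\ (zc I2 a < zc I2 (P I1))%Z /\
  (zc I0 a < zc I0 (P I2))%Z /\ (zc I1 a < zc I1 (P I2))%Z /\ zc I2 (P I2) = zc I2 a /\
  (zc I0 (P I0) + zc I1 (P I0) + zc I2 (P I0) = 0)%Z /\
  (zc I0 (P I1) + zc I1 (P I1) + zc I2 (P I1) = 0)%Z /\
  (zc I0 (P I2) + zc I1 (P I2) + zc I2 (P I2) = 0)%Z.
Proof.
  destruct (HP I0) as [L0 [E0 H0]], (HP I1) as [L1 [E1 H1]], (HP I2) as [L2 [E2 H2]].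
  pose proof (L_A2 _ L0); pose proof (L_A2 _ L1); pose proof (L_A2 _ L2).
  repeat split; first [ assumption | apply H0; discriminate
                      | apply H1; discriminate | apply H2; discriminate ].
Qed.

Lemma tri_det_pos : (0 < tri_det)%Z.
Proof.
  pose proof touching_coords as F; unfold tri_det, edge1, edge2; zcoords.
  destruct (P I0) as [[x0 x1] x2], (P I1) as [[y0 y1] y2], (P I2) as [[w0 w1] w2],
    a as [[a0 a1] a2].
  simpl in *; unfold zc0, zc1, zc2 in *; simpl in *.
  destruct F as [F1 [F2 [F3 [F4 [F5 [F6 [F7 [F8 [F9 [S0 [S1 S2]]]]]]]]]]].
  set (s := (x1 - a1)%Z); set (t := (x2 - a2)%Z).
  set (u := (y0 - x0)%Z); set (v := (w0 - x0)%Z).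
  replace x1 with (a1 + s)%Z by (unfold s; lia).
  replace x2 with (a2 + t)%Z by (unfold t; lia).
  replace y0 with (x0 + u)%Z by (unfold u; lia).
  replace w0 with (x0 + v)%Z by (unfold v; lia).
  assert (0 < u < s + t)%Z by (unfold u, s, t; lia).
  assert (0 < v < s + t)%Z by (unfold v, s, t; lia).
  assert (0 < s)%Z by (unfold s; lia); assert (0 < t)%Z by (unfold t; lia).
  replace y1 with a1 by lia; replace w1 with (- x0 - v - a2)%Z by lia.
  replace a1 with (- x0 - a2 - s - t)%Z by lia.
  destruct (Z_le_gt_dec v t); nia.
Qed.

Hypothesis Ea : empty_up a.

(* A point [P I0 + (s edge1 + t edge2) / tri_det] of the closed triangle [P I0, P I1, P I2]
   other than its vertices lies strictly above [a]. *)
Lemma no_lattice_point_in_touching_triangle w s t : L w ->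
  (forall i, (tri_det * (zc i w - zc i (P I0)) = s * zc i edge1 + t * zc i edge2)%Z) ->
  (0 <= s)%Z -> (0 <= t)%Z -> (s + t <= tri_det)%Z -> (0 < s \/ 0 < t)%Z ->
  (s + t < tri_det \/ (0 < s /\ 0 < t))%Z -> False.
Proof.
  intros Lw Hw H1 H2 H3 H4 H5.
  destruct (Ea w Lw) as [i Hi].
  pose proof tri_det_pos; pose proof touching_coords as F.
  specialize (Hw i); unfold edge1, edge2 in Hw; zcoords.
  destruct F as [F1 [F2 [F3 [F4 [F5 [F6 [F7 [F8 [F9 _]]]]]]]]].
  destruct i; simpl in *.
  - assert (tri_det * (zc I0 w - zc I0 a) > 0)%Z by nia; nia.
  - assert (tri_det * (zc I1 w - zc I1 a) > 0)%Z by nia; nia.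
  - assert (tri_det * (zc I2 w - zc I2 a) > 0)%Z by nia; nia.
Qed.

Definition cramer1 (q : zpt) : Z :=
  ((zc I0 q - zc I0 (P I0)) * zc I1 edge2 - (zc I1 q - zc I1 (P I0)) * zc I0 edge2)%Z.
Definition cramer2 (q : zpt) : Z :=
  (zc I0 edge1 * (zc I1 q - zc I1 (P I0)) - zc I1 edge1 * (zc I0 q - zc I0 (P I0)))%Z.

Lemma cramer_rule q : inA2 q -> forall i,
  (tri_det * (zc i q - zc i (P I0)) = cramer1 q * zc i edge1 + cramer2 q * zc i edge2)%Z.
Proof.
  intros Sq i; pose proof touching_coords as F.
  destruct F as [_ [_ [_ [_ [_ [_ [_ [_ [_ [S0 [S1 S2]]]]]]]]]]].
  unfold cramer1, cramer2, tri_det, edge1, edge2; zcoords.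
  destruct i; simpl; try ring.
  unfold inA2 in Sq; simpl in *.
  replace (zc2 q) with (- zc0 q - zc1 q)%Z by lia.
  replace (zc2 (P I0)) with (- zc0 (P I0) - zc1 (P I0))%Z by lia.
  replace (zc2 (P I1)) with (- zc0 (P I1) - zc1 (P I1))%Z by lia.
  replace (zc2 (P I2)) with (- zc0 (P I2) - zc1 (P I2))%Z by lia.
  ring.
Qed.

Lemma touching_triangle_spans q : L q -> exists m n, q = tri_point m n.
Proof.
  intro Lq; pose proof tri_det_pos as HD; pose proof (cramer_rule q (L_A2 _ Lq)) as Cr.
  set (D := tri_det) in *.
  set (m := (cramer1 q / D)%Z); set (s := (cramer1 q mod D)%Z).
  set (n := (cramer2 q / D)%Z); set (t := (cramer2 q mod D)%Z).
  assert (Em : cramer1 q = (D * m + s)%Z) by (apply Z.div_mod; lia).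
  assert (En : cramer2 q = (D * n + t)%Z) by (apply Z.div_mod; lia).
  assert (Hs : (0 <= s < D)%Z) by (apply Z.mod_pos_bound; lia).
  assert (Ht : (0 <= t < D)%Z) by (apply Z.mod_pos_bound; lia).
  set (r := zsub q (zadd (zscale m edge1) (zscale n edge2))).
  assert (Lr : L r).
  { apply L_sub; [exact Lq | apply L_edge_comb]. }
  assert (Cr' : forall i, (D * (zc i r - zc i (P I0)) = s * zc i edge1 + t * zc i edge2)%Z).
  { intro i; specialize (Cr i); unfold r; zcoords; nia. }
  assert (Hst : s = 0%Z /\ t = 0%Z).
  { destruct (Z_le_gt_dec (s + t) D).
    - destruct (Z.eq_dec s 0), (Z.eq_dec t 0); try (split; assumption);
        exfalso; apply (no_lattice_point_in_touching_triangle r s t Lr Cr'); lia.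
    - (* reflect [r] through the midpoint of [P I1, P I2] *)
      exfalso.
      set (w := zsub (zadd (P I1) (P I2)) r).
      assert (Lw : L w) by (apply L_sub; [apply L_add; apply HP | exact Lr]).
      apply (no_lattice_point_in_touching_triangle w (D - s) (D - t) Lw); try lia.
      intro i; specialize (Cr' i); unfold w; unfold edge1, edge2 in *; zcoords; nia. }
  exists m, n; apply zpt_ext; intro i; specialize (Cr i).
  destruct Hst as [-> ->]; unfold tri_point; zcoords; rewrite Em, En in Cr.
  assert (D * (zc i q - zc i (P I0) - (m * zc i edge1 + n * zc i edge2)) = 0)%Z by nia.
  apply Z.mul_eq_0 in H as [H|H]; lia.
Qed.

End TouchingTriangle.

(** * Two inequivalent maximal empty triangles *)

Lemma tri_det_change P Q (m n : idx -> Z) :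
  (forall j, Q j = tri_point P (m j) (n j)) -> tri_det Q = (det3 m n * tri_det P)%Z.
Proof.
  intro EQ; unfold tri_det, edge1, edge2; rewrite !EQ.
  unfold det3, tri_point, edge1, edge2; zcoords; ring.
Qed.

Lemma zdot_edges_nonzero psi e f : nonconstant psi -> inA2 e -> inA2 f ->
  (zc I0 e * zc I1 f - zc I1 e * zc I0 f <> 0)%Z ->
  (zdot psi e <> 0 \/ zdot psi f <> 0)%Z.
Proof.
  intros [i [i' Hii]] Se Sf Hdet.
  destruct (Z.eq_dec (zdot psi e) 0) as [H1|H1]; [|now left].
  destruct (Z.eq_dec (zdot psi f) 0) as [H2|H2]; [|now right].
  exfalso; unfold inA2 in Se, Sf; simpl in *.
  set (d := (zc0 e * zc1 f - zc1 e * zc0 f)%Z) in *.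
  assert (E2 : zc2 e = (- zc0 e - zc1 e)%Z) by lia.
  assert (F2 : zc2 f = (- zc0 f - zc1 f)%Z) by lia.
  assert (H02 : ((zc0 psi - zc2 psi) * d = zc1 f * zdot psi e - zc1 e * zdot psi f)%Z).
  { unfold d, zdot; simpl; rewrite E2, F2; ring. }
  assert (H12 : ((zc1 psi - zc2 psi) * d = zc0 e * zdot psi f - zc0 f * zdot psi e)%Z).
  { unfold d, zdot; simpl; rewrite E2, F2; ring. }
  rewrite H1, H2, !Z.mul_0_r, Z.sub_0_r in H02, H12.
  apply Z.mul_eq_0 in H02; apply Z.mul_eq_0 in H12.
  destruct i, i'; simpl in *; lia.
Qed.

Definition among3 (X Y Z W : zpt) : Prop := W = X \/ W = Y \/ W = Z.

Definition in_opposite (P : idx -> zpt) (l X : zpt) : Prop :=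
  among3 (zadd (P I1) l) (zadd (P I2) l) (zadd (zsub (zadd (P I1) (P I2)) (P I0)) l) X.

Section Opposite.

Variables (a b : zpt) (P Q : idx -> zpt).
Hypothesis Ea : empty_up a.
Hypothesis Eb : empty_up b.
Hypothesis HP : forall j, lowest_on_side a j (P j).
Hypothesis HQ : forall j, lowest_on_side b j (Q j).
Hypothesis Hab : forall l, L l -> b <> zadd a l.
Variables m n : idx -> Z.
Hypothesis EQ : forall j, Q j = tri_point P (m j) (n j).

Let SP j : on_side a j (P j) := proj1 (HP j).
Let SQ j : on_side b j (Q j) := proj1 (HQ j).

Lemma coords_det_nonzero : det3 m n <> 0%Z.
Proof.
  intro Hd; pose proof (tri_det_pos b Q SQ); rewrite (tri_det_change P Q m n EQ), Hd in H.
  lia.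
Qed.

(* Separate [Q] from the translate of [P] by [l1 edge1 + l2 edge2] and read the
   separating functional in the coordinates of [tri_point]. *)
Lemma coords_separated l1 l2 : separated_from_up m n l1 l2.
Proof.
  set (l := zadd (zscale l1 (edge1 P)) (zscale l2 (edge2 P))).
  assert (Ll : L l) by exact (L_edge_comb a P SP l1 l2).
  destruct (maximal_empty_separable (zadd a l) b (fun j => zadd (P j) l) Q)
    as [psi [ga [Hnd Hs]]].
  - now apply empty_up_add.
  - exact Eb.
  - intro j; now apply lowest_on_side_add.
  - exact HQ.
  - intro E; apply (Hab l Ll); symmetry; exact E.
  - exists (zdot psi (P I0)), (zdot psi (edge1 P)), (zdot psi (edge2 P)), ga.
    assert (P1e : P I1 = zadd (P I0) (edge1 P))
      by (apply zpt_ext; intro; unfold edge1; zcoords; lia).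
    assert (P2e : P I2 = zadd (P I0) (edge2 P))
      by (apply zpt_ext; intro; unfold edge2; zcoords; lia).
    split; [|split; [|split; [|split]]].
    + apply zdot_edges_nonzero;
        [exact Hnd | apply L_A2, (L_edge1 a), SP | apply L_A2, (L_edge2 a), SP |].
      pose proof (tri_det_pos a P SP); unfold tri_det in *; lia.
    + destruct (Hs I0) as [Hs0 _]; unfold l in Hs0; rewrite !zdot_add, !zdot_scale in Hs0; lia.
    + destruct (Hs I1) as [Hs1 _]; unfold l in Hs1; rewrite P1e in Hs1.
      rewrite !zdot_add, !zdot_scale in Hs1; lia.
    + destruct (Hs I2) as [Hs2 _]; unfold l in Hs2; rewrite P2e in Hs2.
      rewrite !zdot_add, !zdot_scale in Hs2; lia.
    + intro j; destruct (Hs j) as [_ Hsj]; rewrite EQ in Hsj; unfold tri_point in Hsj.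
      rewrite !zdot_add, !zdot_scale in Hsj; lia.
Qed.

End Opposite.

Lemma opposite_triangle a b P Q :
  empty_up a -> empty_up b ->
  (forall j, lowest_on_side a j (P j)) -> (forall j, lowest_on_side b j (Q j)) ->
  (forall l, L l -> b <> zadd a l) ->
  exists l, L l /\ forall j, in_opposite P l (Q j).
Proof.
  intros Ea Eb HP HQ Hab.
  assert (SP : forall j, on_side a j (P j)) by (intro; apply HP).
  assert (Fq : forall j, exists mn, Q j = tri_point P (fst mn) (snd mn)).
  { intro j; destruct (touching_triangle_spans a P SP Ea (Q j) (proj1 (proj1 (HQ j))))
      as [m' [n' E]]; now exists (m', n'). }
  destruct (idx_choice _ Fq) as [mn EQ].
  set (m := fun j => fst (mn j)); set (n := fun j => snd (mn j)).
  destruct (down_triangle_of_separated m n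
              (coords_det_nonzero b P Q HQ m n EQ)
              (coords_separated a b P Q Ea Eb HP HQ Hab m n EQ)) as [l1 [l2 Hdown]].
  exists (zadd (zscale l1 (edge1 P)) (zscale l2 (edge2 P))); split.
  { exact (L_edge_comb a P SP l1 l2). }
  intro j; rewrite EQ; unfold in_opposite, among3, tri_point, edge1, edge2.
  fold (m j) (n j).
  destruct (Hdown j) as [[-> ->]|[[-> ->]|[-> ->]]]; [left | right; left | right; right];
    apply zpt_ext; intro; zcoords; ring.
Qed.

Lemma among3_injective_onto X Y Z (R : idx -> zpt) :
  (forall j k, j <> k -> R j <> R k) -> (forall j, among3 X Y Z (R j)) ->
  forall W, among3 X Y Z W -> exists k, R k = W.
Proof.
  intros Hinj HR W HW.
  assert (R I0 <> R I1) by (apply Hinj; discriminate).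
  assert (R I0 <> R I2) by (apply Hinj; discriminate).
  assert (R I1 <> R I2) by (apply Hinj; discriminate).
  unfold among3 in *.
  destruct (HR I0) as [E0|[E0|E0]], (HR I1) as [E1|[E1|E1]], (HR I2) as [E2|[E2|E2]],
    HW as [EW|[EW|EW]]; subst W;
    first [ exists I0; congruence | exists I1; congruence | exists I2; congruence
          | exfalso; congruence ].
Qed.

Lemma argmin_labelling_unique X Y Z (R1 R2 : idx -> zpt) :
  (forall j, among3 X Y Z (R1 j)) -> (forall j, among3 X Y Z (R2 j)) ->
  (forall j k, k <> j -> (zc j (R1 j) < zc j (R1 k))%Z) ->
  (forall j k, k <> j -> (zc j (R2 j) < zc j (R2 k))%Z) ->
  forall j, R1 j = R2 j.
Proof.
  intros H1 H2 S1 S2 j.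
  assert (I1 : forall j k, j <> k -> R1 j <> R1 k).
  { intros j' k Hjk E; specialize (S1 j' k (not_eq_sym Hjk)); rewrite E in S1; lia. }
  assert (I2 : forall j k, j <> k -> R2 j <> R2 k).
  { intros j' k Hjk E; specialize (S2 j' k (not_eq_sym Hjk)); rewrite E in S2; lia. }
  destruct (among3_injective_onto X Y Z R1 I1 H1 (R2 j) (H2 j)) as [k Hk].
  destruct (idx_eq_dec k j) as [->|Hkj]; [exact Hk|].
  destruct (among3_injective_onto X Y Z R2 I2 H2 (R1 j) (H1 j)) as [k' Hk'].
  destruct (idx_eq_dec k' j) as [->|Hk'j]; [symmetry; exact Hk'|].
  exfalso; pose proof (S1 j k Hkj); pose proof (S2 j k' Hk'j).
  rewrite Hk in H; rewrite Hk' in H0; lia.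
Qed.

(* Both [Q] and [R] are translates of the triangle opposite to [P], and the labelling by
   sides recovers the corners [b] and [c] from these triangles. *)
Lemma maximal_empty_two_classes a P b Q c R :
  empty_up a -> empty_up b -> empty_up c ->
  (forall j, lowest_on_side a j (P j)) -> (forall j, lowest_on_side b j (Q j)) ->
  (forall j, lowest_on_side c j (R j)) ->
  (forall l, L l -> b <> zadd a l) -> (forall l, L l -> c <> zadd a l) ->
  exists l, L l /\ c = zadd b l.
Proof.
  intros Ea Eb Ec HP HQ HR Nb Nc.
  destruct (opposite_triangle a b P Q Ea Eb HP HQ Nb) as [l1 [Ll1 T1]].
  destruct (opposite_triangle a c P R Ea Ec HP HR Nc) as [l2 [Ll2 T2]].
  assert (SQ : forall j, on_side b j (Q j)) by (intro; apply HQ).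
  assert (SR : forall j, on_side c j (R j)) by (intro; apply HR).
  set (d := zsub l1 l2).
  assert (E : forall j, Q j = zadd (R j) d).
  { apply (argmin_labelling_unique (zadd (P I1) l1) (zadd (P I2) l1)
             (zadd (zsub (zadd (P I1) (P I2)) (P I0)) l1)).
    - exact T1.
    - intro j; destruct (T2 j) as [E|[E|E]]; rewrite E; unfold among3, d;
        [left | right; left | right; right]; apply zpt_ext; intro; zcoords; ring.
    - exact (on_sides_lt b Q SQ).
    - intros j k Hkj; zcoords; pose proof (on_sides_lt c R SR j k Hkj); lia. }
  exists (zsub l2 l1); split; [now apply L_sub|].
  apply zpt_ext; intro j.
  destruct (SQ j) as [_ [Eb' _]], (SR j) as [_ [Ec' _]].
  assert (Ej : zc j (Q j) = zc j (zadd (R j) d)) by now rewrite E.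
  unfold d in Ej; zcoords; lia.
Qed.

End Sublattice.

(** * Critical points of the triangular distance *)

Open Scope R_scope.

Definition cr (i : idx) (x : pt) : R :=
  match i with I0 => c0 x | I1 => c1 x | I2 => c2 x end.

Definition mkp (f : idx -> R) : pt := (f I0, f I1, f I2).

Lemma pt_ext (x y : pt) : (forall i, cr i x = cr i y) -> x = y.
Proof.
  destruct x as [[x0 x1] x2], y as [[y0 y1] y2]; intro H.
  generalize (H I0) (H I1) (H I2); simpl; unfold c0, c1, c2; simpl.
  intros -> -> ->; reflexivity.
Qed.

Lemma cr_z i p : cr i (zpt_to_pt p) = IZR (zc i p).
Proof. now destruct i. Qed.
Lemma cr_mkp f i : cr i (mkp f) = f i.
Proof. now destruct i. Qed.
Lemma cr_padd i x y : cr i (padd x y) = cr i x + cr i y.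
Proof. now destruct i. Qed.
Lemma cr_popp i x : cr i (popp x) = - cr i x.
Proof. now destruct i. Qed.
Lemma cr_psub i x y : cr i (psub x y) = cr i x - cr i y.
Proof. now destruct i. Qed.

Ltac rcoords :=
  repeat rewrite ?cr_padd, ?cr_popp, ?cr_psub, ?cr_mkp, ?cr_z, ?zc_add, ?zc_sub, ?zc_opp,
    ?plus_IZR, ?minus_IZR, ?opp_IZR in *.

Lemma inH0_sum x : inH0 x <-> cr I0 x + cr I1 x + cr I2 x = 0.
Proof. reflexivity. Qed.

Lemma inA2_IZR_sum p : inA2 p -> IZR (zc I0 p) + IZR (zc I1 p) + IZR (zc I2 p) = 0.
Proof. intro Sp; rewrite <- !plus_IZR; unfold inA2 in Sp; simpl; now rewrite Sp. Qed.

Lemma d_tri_ge x p v : v <= d_tri x p <-> exists i, v <= cr i x - cr i p.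
Proof.
  unfold d_tri; rewrite !Rmax_Rle; split.
  - intros [H|[H|H]]; [exists I0 | exists I1 | exists I2]; exact H.
  - intros [[] H]; simpl in H; tauto.
Qed.

Lemma d_tri_le x p v : d_tri x p <= v <-> forall i, cr i x - cr i p <= v.
Proof.
  unfold d_tri; split.
  - intros H i; pose proof (Rmax_l (c0 x - c0 p) (Rmax (c1 x - c1 p) (c2 x - c2 p))).
    pose proof (Rmax_r (c0 x - c0 p) (Rmax (c1 x - c1 p) (c2 x - c2 p))).
    pose proof (Rmax_l (c1 x - c1 p) (c2 x - c2 p)).
    pose proof (Rmax_r (c1 x - c1 p) (c2 x - c2 p)).
    destruct i; simpl; lra.
  - intro H; apply Rmax_lub; [apply (H I0) | apply Rmax_lub; [apply (H I1) | apply (H I2)]].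
Qed.

Lemma integer_gap (z : R) : exists d, 0 < d /\ forall k : Z, IZR k < z -> d <= z - IZR k.
Proof.
  destruct (up_floor z) as [H1 H2]; set (f := (up z - 1)%Z) in *.
  destruct (Rlt_dec (IZR f) z) as [Hl|Hl].
  - exists (z - IZR f); split; [lra|].
    intros k Hk; assert (k < f + 1)%Z by (apply lt_IZR; rewrite plus_IZR; lra).
    assert (IZR k <= IZR f) by (apply IZR_le; lia); lra.
  - exists 1; split; [lra|].
    intros k Hk; assert (k < f)%Z by (apply lt_IZR; lra).
    assert (IZR k + 1 <= IZR f) by (rewrite <- plus_IZR; apply IZR_le; lia); lra.
Qed.

Lemma coordinate_gap (x : pt) (v : R) : exists de, 0 < de /\
  forall i (k : Z), v < cr i x - IZR k -> v + de <= cr i x - IZR k.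
Proof.
  destruct (idx_choice (fun i d => 0 < d /\ forall k : Z, IZR k < cr i x - v ->
                                                   d <= cr i x - v - IZR k))
    as [d Hd]; [intro; apply integer_gap|].
  exists (Rmin (d I0) (Rmin (d I1) (d I2))); split.
  - apply Rmin_pos; [|apply Rmin_pos]; apply Hd.
  - intros i k Hk; assert (Rmin (d I0) (Rmin (d I1) (d I2)) <= d i).
    { pose proof (Rmin_l (d I0) (Rmin (d I1) (d I2))).
      pose proof (Rmin_r (d I0) (Rmin (d I1) (d I2))).
      pose proof (Rmin_l (d I1) (d I2)); pose proof (Rmin_r (d I1) (d I2)).
      destruct i; lra. }
    pose proof (proj2 (Hd i) k ltac:(lra)); lra.
Qed.

(* Moves [x] by [ep] towards side [j] of the up-triangle, staying in [H_0]. *)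
Definition nudge (x : pt) (ep : R) (j : idx) : pt :=
  mkp (fun i => cr i x + ep * (if idx_eq_dec i j then -2 else 1)).

Lemma nudge_inH0 x ep j : inH0 x -> inH0 (nudge x ep j).
Proof. rewrite !inH0_sum; unfold nudge; rcoords; destruct j; simpl; lra. Qed.

Lemma nudge_close x ep j i : 0 < ep -> Rabs (cr i (nudge x ep j) - cr i x) <= 2 * ep.
Proof.
  intro Hep; unfold nudge; rcoords.
  replace (cr i x + _ - cr i x) with (ep * (if idx_eq_dec i j then -2 else 1)) by ring.
  destruct idx_eq_dec; [rewrite Rabs_left | rewrite Rabs_right]; lra.
Qed.

Lemma nudge_d_tri_le x ep j p : 0 < ep -> d_tri (nudge x ep j) p <= d_tri x p + ep.
Proof.
  intro Hep; apply d_tri_le; intro i.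
  pose proof (proj1 (d_tri_le x p _) (Rle_refl _) i); unfold nudge; rcoords.
  destruct idx_eq_dec; lra.
Qed.

Lemma nudge_d_tri_ge x v de ep j q : 0 < ep -> 3 * ep <= de ->
  (forall i, v < cr i x - cr i q -> v + de <= cr i x - cr i q) ->
  v <= d_tri x q ->
  ~ (cr j x - cr j q = v /\ forall k, k <> j -> cr k x - cr k q < v) ->
  v + ep <= d_tri (nudge x ep j) q.
Proof.
  intros Hep Hde Hgap Hv Hnot; apply d_tri_ge.
  assert (Hnudge : forall i, cr i (nudge x ep j) - cr i q
                            = cr i x - cr i q + ep * (if idx_eq_dec i j then -2 else 1)).
  { intro i; unfold nudge; rcoords; ring. }
  destruct (classic (exists i, v < cr i x - cr i q)) as [[i Hi]|Hno].
  { exists i; rewrite Hnudge; specialize (Hgap i Hi); destruct idx_eq_dec; lra. }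
  assert (Hall : forall i, cr i x - cr i q <= v) by (intro i; apply Rnot_lt_le; eauto).
  destruct (classic (exists k, k <> j /\ cr k x - cr k q = v)) as [[k [Hk Ek]]|Hno2].
  { exists k; rewrite Hnudge; destruct idx_eq_dec; [congruence | lra]. }
  exfalso; apply Hnot.
  destruct (proj1 (d_tri_ge _ _ _) Hv) as [i Hi].
  destruct (idx_eq_dec i j) as [->|Hij].
  - split; [pose proof (Hall j); lra|].
    intros k Hk; destruct (Rle_lt_or_eq_dec _ _ (Hall k)); [assumption|].
    exfalso; eauto.
  - exfalso; apply Hno2; exists i; split; [exact Hij | pose proof (Hall i); lra].
Qed.

(* The projection of [a] to [H_0], i.e. the centre of the up-triangle with corner [a]. *)
Definition center (a : zpt) : pt :=
  mkp (fun i => IZR (zc i a) - IZR (zc I0 a + zc I1 a + zc I2 a) / 3).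

Section Critical.

Variable L : zpt -> Prop.
Hypothesis HL : is_sublattice_A2 L.

(* At a local maximum of [h] with value [v], every side of the up-triangle of size [v]
   around [x] carries a nearest lattice point in its relative interior: otherwise
   [nudge]-ing [x] towards that side increases [h]. *)
Lemma crit_touches x v eps :
  inH0 x -> is_hval L x v -> 0 < eps ->
  (forall y, inH0 y ->
     Rabs (c0 y - c0 x) < eps -> Rabs (c1 y - c1 x) < eps -> Rabs (c2 y - c2 x) < eps ->
     forall vy, is_hval L y vy -> vy <= v) ->
  forall j, exists p, L p /\ cr j x - IZR (zc j p) = v /\
    forall k, k <> j -> cr k x - IZR (zc k p) < v.
Proof.
  intros Hx [[pst [Lpst Dpst]] Hlow] Heps Hloc j; apply NNPP; intro Hn.
  destruct (coordinate_gap x v) as [de [Hde Hgap]].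
  set (ep := Rmin (de / 3) (eps / 3)).
  assert (0 < ep) by (apply Rmin_pos; lra).
  assert (ep <= de / 3) by apply Rmin_l; assert (ep <= eps / 3) by apply Rmin_r.
  assert (Lower : forall q, L q -> v + ep <= d_tri (nudge x ep j) (zpt_to_pt q)).
  { intros q Lq; apply nudge_d_tri_ge with de; [lra | lra | | now apply Hlow |].
    - intro i; rewrite cr_z; apply Hgap.
    - setoid_rewrite cr_z; intro Hq; apply Hn; exists q; split; [exact Lq | exact Hq]. }
  assert (Hy : is_hval L (nudge x ep j) (v + ep)).
  { split; [exists pst; split; [exact Lpst|] | exact Lower].
    apply Rle_antisym; [rewrite <- Dpst; now apply nudge_d_tri_le | now apply Lower]. }
  assert (Hclose : forall i, Rabs (cr i (nudge x ep j) - cr i x) < eps)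
    by (intro i; pose proof (nudge_close x ep j i ltac:(lra)); lra).
  pose proof (Hloc _ (nudge_inH0 x ep j Hx) (Hclose I0) (Hclose I1) (Hclose I2) _ Hy).
  lra.
Qed.

Lemma crit_corner x : inCrit L x -> exists a, maximal_empty L a /\ x = center a.
Proof.
  intros [Hx [v [Hv [eps [Heps Hloc]]]]].
  destruct (idx_choice _ (crit_touches x v eps Hx Hv Heps Hloc)) as [P HP].
  set (a := mkz (fun j => zc j (P j))).
  assert (Cx : forall i, cr i x = IZR (zc i a) + v).
  { intro i; unfold a; rewrite zc_mkz; destruct (HP i) as [_ [E _]]; lra. }
  assert (Hsum : v = - IZR (zc I0 a + zc I1 a + zc I2 a) / 3).
  { pose proof (proj1 (inH0_sum x) Hx) as Sx; rewrite !Cx in Sx; rewrite !plus_IZR; lra. }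
  exists a; split; [split|].
  - intros q Lq; destruct (proj1 (d_tri_ge _ _ _) (proj2 Hv q Lq)) as [i Hi].
    exists i; rewrite cr_z, Cx in Hi; apply le_IZR; lra.
  - intro j; exists (P j); destruct (HP j) as [Lp [E S]]; split; [exact Lp|split].
    + unfold a; now rewrite zc_mkz.
    + intros k Hk; specialize (S k Hk); rewrite Cx in S; apply lt_IZR; lra.
  - apply pt_ext; intro i; unfold center; rewrite cr_mkp, Cx, Hsum; lra.
Qed.

Lemma inH0_shift x l : L l -> inH0 x -> inH0 (padd x (zpt_to_pt l)).
Proof.
  intros Ll Hx; apply inH0_sum; pose proof (proj1 (inH0_sum x) Hx).
  pose proof (inA2_IZR_sum l (L_A2 L HL l Ll)); rcoords; lra.
Qed.

Lemma d_tri_shift x l p :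
  d_tri (padd x (zpt_to_pt l)) (zpt_to_pt p) = d_tri x (zpt_to_pt (zsub p l)).
Proof.
  apply Rle_antisym; apply d_tri_le; intro i.
  - pose proof (proj1 (d_tri_le x (zpt_to_pt (zsub p l)) _) (Rle_refl _) i); rcoords; lra.
  - pose proof (proj1 (d_tri_le (padd x (zpt_to_pt l)) (zpt_to_pt p) _) (Rle_refl _) i).
    rcoords; lra.
Qed.

Lemma hval_shift x l v : L l -> is_hval L x v -> is_hval L (padd x (zpt_to_pt l)) v.
Proof.
  intros Ll [[p [Lp Dp]] Hlow]; split.
  - exists (zadd p l); split; [now apply L_add|].
    rewrite d_tri_shift; replace (zsub (zadd p l) l) with p; [exact Dp|].
    apply zpt_ext; intro; zcoords; lia.
  - intros q Lq; rewrite d_tri_shift; apply Hlow; now apply L_sub.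
Qed.

Lemma shift_back_diff i x y l :
  cr i (padd y (zpt_to_pt (zopp l))) - cr i x = cr i y - cr i (padd x (zpt_to_pt l)).
Proof. rcoords; ring. Qed.

Lemma crit_shift x l : L l -> inCrit L x -> inCrit L (padd x (zpt_to_pt l)).
Proof.
  intros Ll [Hx [v [Hv [eps [Heps Hloc]]]]].
  split; [now apply inH0_shift|].
  exists v; split; [now apply hval_shift|].
  exists eps; split; [exact Heps|].
  intros y Hy A0 A1 A2 vy Hvy.
  assert (Ll' : L (zopp l)) by now apply L_opp.
  apply (Hloc (padd y (zpt_to_pt (zopp l)))); [now apply inH0_shift | | | | now apply hval_shift].
  - pose proof (shift_back_diff I0 x y l) as E; cbn [cr] in E; now rewrite E.
  - pose proof (shift_back_diff I1 x y l) as E; cbn [cr] in E; now rewrite E.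
  - pose proof (shift_back_diff I2 x y l) as E; cbn [cr] in E; now rewrite E.
Qed.

Lemma center_add a l : L l -> center (zadd a l) = padd (center a) (zpt_to_pt l).
Proof.
  intro Ll; pose proof (inA2_IZR_sum l (L_A2 L HL l Ll)).
  apply pt_ext; intro i; unfold center; rcoords; lra.
Qed.

Definition congr (y x : pt) : Prop := exists l, L l /\ y = padd x (zpt_to_pt l).

Lemma maximal_empty_lowest a :
  maximal_empty L a -> exists P : idx -> zpt, forall j, lowest_on_side L a j (P j).
Proof.
  intros [_ Ha]; apply idx_choice; intro j; exact (lowest_on_side_exists L a j (Ha j)).
Qed.

Lemma crit_two_classes x y z : inCrit L x -> inCrit L y -> inCrit L z ->
  ~ congr y x -> ~ congr z x -> congr z y.
Proof.
  intros Cx Cy Cz Nyx Nzx.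
  destruct (crit_corner x Cx) as [a [Va ->]], (crit_corner y Cy) as [b [Vb ->]],
    (crit_corner z Cz) as [c [Vc ->]].
  destruct (maximal_empty_lowest a Va) as [P HP], (maximal_empty_lowest b Vb) as [Q HQ],
    (maximal_empty_lowest c Vc) as [R HR].
  destruct (maximal_empty_two_classes L HL a P b Q c R (proj1 Va) (proj1 Vb) (proj1 Vc)
              HP HQ HR) as [l [Ll El]].
  - intros l Ll E; apply Nyx; exists l; split; [exact Ll|]; rewrite E; now apply center_add.
  - intros l Ll E; apply Nzx; exists l; split; [exact Ll|]; rewrite E; now apply center_add.
  - exists l; split; [exact Ll|]; rewrite El; now apply center_add.
Qed.

Lemma flip_shift x y u v l : (forall i, cr i u + cr i v = cr i x + cr i y) ->
  u = padd x (zpt_to_pt l) -> v = padd y (zpt_to_pt (zopp l)).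
Proof.
  intros Hs Eu; apply pt_ext; intro i; specialize (Hs i); rewrite Eu in Hs; rcoords; lra.
Qed.

Section TwoCosets.

Variables x0 y0 : pt.
Hypotheses (Cx0 : inCrit L x0) (Cy0 : inCrit L y0).
Hypothesis Hcosets : forall z, inCrit L z -> congr z x0 \/ congr z y0.

(* If [u] is a shift of one of [x0], [y0] then [v] is the opposite shift of the other. *)
Lemma crit_of_sum u v : (forall i, cr i u + cr i v = cr i x0 + cr i y0) ->
  inCrit L u -> inCrit L v.
Proof.
  intros Hs Cu; destruct (Hcosets u Cu) as [[l [Ll E]]|[l [Ll E]]].
  - rewrite (flip_shift x0 y0 u v l Hs E); apply crit_shift; [now apply L_opp | exact Cy0].
  - assert (Hs' : forall i, cr i u + cr i v = cr i y0 + cr i x0) by (intro i; rewrite Hs; ring).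
    rewrite (flip_shift y0 x0 u v l Hs' E); apply crit_shift; [now apply L_opp | exact Cx0].
Qed.

Lemma crit_reflection_invariant : reflection_invariant L.
Proof.
  exists (popp (padd x0 y0)); intro w; split; apply crit_of_sum; intro i; rcoords; ring.
Qed.

End TwoCosets.

End Critical.

Theorem mainTheorem18 :
  forall L : zpt -> Prop,
    is_sublattice_A2 L -> has_rank2 L -> reflection_invariant L.
Proof.
  intros L HL _.
  destruct (classic (exists x, inCrit L x)) as [[x0 Cx0]|Hno].
  2:{ exists (0, 0, 0); intro x; split; intro H; exfalso; eauto. }
  destruct (classic (exists y, inCrit L y /\ ~ congr L y x0)) as [[y0 [Cy0 Ny0]]|Hall].
  - apply (crit_reflection_invariant L HL x0 y0 Cx0 Cy0); intros z Cz.
    destruct (classic (congr L z x0)) as [H|Nz]; [now left | right].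
    exact (crit_two_classes L HL x0 y0 z Cx0 Cy0 Cz Ny0 Nz).
  - apply (crit_reflection_invariant L HL x0 x0 Cx0 Cx0); intros z Cz; left.
    apply NNPP; intro Nz; apply Hall; eauto.
Qed.
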